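(* For every positive integer $n$, the class $\mathcal K_n^*$ has the expansion property relative to the class $\mathcal K_n$.
   Context: Expansion property: let $L\subseteq L^*$ be relational languages, $\mathcal K$ a class of finite $L$-structures and $\mathcal K^*$ a class of finite $L^*$-structures whose $L$-reducts lie in $\mathcal K$. $\mathcal K^*$ has the expansion property relative to $\mathcal K$ if for every $\mathbf A\in\mathcal K$ there is $\mathbf B\in\mathcal K$ such that for all $\mathbf A^*,\mathbf B^*\in\mathcal K^*$ whose $L$-reducts are $\mathbf A$ and $\mathbf B$ respectively, $\mathbf A^*$ embeds into $\mathbf B^*$. A directed graph $(A,E)$ ($E$ irreflexive and asymmetric) is complete multipartite if the relation ''$u=v$, or neither $E(u,v)$ nor $E(v,u)$'' is an equivalence relation on $A$; its classes are called the parts. $\mathcal K_n$ is the class of finite complete multipartite directed graphs with at most $n$ parts (the age of the generic complete $n$-partite directed graph $n*I_\omega$). $\mathcal K_n^*$ is the class of finite structures $(A,E,P_0,\dots,P_{n-1},<)$ such that $(A,E)\in\mathcal K_n$, $P_0,\dots,P_{n-1}$ are pairwise disjoint subsets of $A$ each of which is either empty or a part, every part equals some $P_i$, and $<$ is a linear order on $A$ such that every element of $P_i$ is below every element of $P_j$ whenever $i<j$. *)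

From mathcomp Require Import all_boot.
Set Implicit Arguments. Unset Strict Implicit. Unset Printing Implicit Defensive.

Definition is_digraph (T : finType) (E : rel T) : Prop :=
  (forall x, ~~ E x x) /\ (forall x y, E x y -> ~~ E y x).

Definition nonadj (T : finType) (E : rel T) : rel T :=
  fun u v => (u == v) || (~~ E u v && ~~ E v u).

Definition complete_multipartite (T : finType) (E : rel T) : Prop :=
  is_digraph E /\ equivalence_rel (nonadj E).

Definition part_of (T : finType) (E : rel T) (x : T) : {set T} :=
  [set y | nonadj E x y].

Definition is_part (T : finType) (E : rel T) (X : {set T}) : Prop :=
  exists x, X = part_of E x.

Definition parts (T : finType) (E : rel T) : {set {set T}} :=
  [set part_of E x | x in T].

Definition in_Kn (n : nat) (T : finType) (E : rel T) : Prop :=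
  complete_multipartite E /\ #|parts E| <= n.

Definition in_Kn_star (n : nat) (T : finType) (E : rel T)
    (P : 'I_n -> {set T}) (lt : rel T) : Prop :=
  in_Kn n E /\
  [/\ (forall i j : 'I_n, i != j -> [disjoint P i & P j]),
      (forall i : 'I_n, P i = set0 \/ is_part E (P i)),
      (forall X, is_part E X -> exists i : 'I_n, X = P i),
      [/\ (forall x, ~~ lt x x),
          (forall x y z, lt x y -> lt y z -> lt x z) &
          (forall x y, x != y -> lt x y || lt y x)] &
      (forall (i j : 'I_n) x y, (i < j)%N -> x \in P i -> y \in P j -> lt x y)].

Definition star_embedding (n : nat) (TA TB : finType)
    (EA : rel TA) (PA : 'I_n -> {set TA}) (ltA : rel TA)
    (EB : rel TB) (PB : 'I_n -> {set TB}) (ltB : rel TB) (f : TA -> TB) : Prop :=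
  [/\ injective f,
      (forall x y, EB (f x) (f y) = EA x y),
      (forall (i : 'I_n) x, (f x \in PB i) = (x \in PA i)) &
      (forall x y, ltB (f x) (f y) = ltA x y)].

From mathcomp Require Import all_boot.
Set Implicit Arguments. Unset Strict Implicit. Unset Printing Implicit Defensive.

(* We work with labelled structures: a labelling c : T -> 'I_n whose fibres
   are the parts of a complete multipartite digraph E, together with an order
   that is only required to be linear inside each fibre.  For k <= n the
   property [uniform_target n k] says that any finite family of labelled
   ordered expansions of one digraph embeds into a single labelled target, for
   every blockwise order of the target that follows a fixed default order on
   the labels >= k.  The disjoint union of the family gives k = 0; the step
   k -> k+1 replaces the fibre of label k by a large fresh fibre W and every
   other vertex b by the copies (b, g), g : W -> bool prescribing the edges
   towards W, so that any order on W works (finite linear orders embed into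
   larger ones, via ranks).  For k = n the target is arbitrary ordered.
   Finally, for A in K_n we apply this to the family of all labelled ordered
   expansions of A; an expansion in K_n^* is such a labelling by part indices,
   up to a permutation of the labels, and the order across parts is forced by
   the part indices. *)

Definition linear_on (T : finType) (P : pred T) (lt : rel T) : Prop :=
  [/\ forall x, lt x x = false,
      forall x y z, P x -> P y -> P z -> lt x y -> lt y z -> lt x z &
      forall x y, P x -> P y -> x <> y -> lt x y || lt y x].

Section Rank.
Variables (T : finType) (P : pred T) (lt : rel T).
Hypothesis lt_linear : linear_on P lt.

Definition rank (x : T) : nat := #|[set z | P z && lt z x]|.

Lemma rank_lt x y : P x -> P y -> lt x y -> rank x < rank y.
Proof.
case: lt_linear => irr tr _ Px Py lxy; apply: proper_card; apply/properP; split.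
  by apply/subsetP=> z; rewrite !inE => /andP[Pz lzx]; rewrite Pz (tr z x y).
by exists x; rewrite !inE ?Px ?lxy ?irr.
Qed.

Lemma lt_rank x y : P x -> P y -> lt x y = (rank x < rank y).
Proof.
case: (lt_linear) => irr _ tot Px Py; case lxy: (lt x y); first by rewrite rank_lt.
case: (eqVneq x y) => [->|nxy]; first by rewrite ltnn.
have := tot _ _ Px Py (elimN eqP nxy); rewrite lxy /= => lyx.
by rewrite ltnNge ltnW // rank_lt.
Qed.

Lemma rank_inj x y : P x -> P y -> rank x = rank y -> x = y.
Proof.
case: (lt_linear) => _ _ tot Px Py e; apply/eqP; apply: contraT => nxy.
by have := tot _ _ Px Py (elimN eqP nxy); rewrite !lt_rank // e ltnn.
Qed.

Lemma rank_bound x : P x -> rank x < #|P|.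
Proof.
case: (lt_linear) => irr _ _ Px; rewrite -cardsE; apply: proper_card.
apply/properP; split; first by apply/subsetP=> z; rewrite !inE => /andP[].
by exists x; rewrite !inE ?Px ?irr.
Qed.

End Rank.

(* A finite linear order embeds into every linear order with at least as many
   elements: send the element of rank r to the element of rank r. *)
Lemma linear_order_embedding (X Y : finType) (P : pred X) (ltX : rel X)
    (ltY : rel Y) (y0 : Y) :
  linear_on P ltX -> linear_on predT ltY -> #|P| <= #|Y| ->
  exists h : X -> Y, forall x y, P x -> P y -> ltY (h x) (h y) = ltX x y.
Proof.
move=> linX linY cardPY.
pose rankY (y : Y) : 'I_#|Y| := Ordinal (rank_bound linY (erefl : predT y)).
have rankY_inj : injective rankY.
  by move=> a b /(congr1 val) /=; apply: (rank_inj linY).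
have [g _ rankYK] := inj_card_bij rankY_inj (eq_leq (card_ord _)).
pose h x := g (insubd (rankY y0) (rank P ltX x)).
have rank_h x : P x -> rank predT ltY (h x) = rank P ltX x.
  move=> Px; have := congr1 val (rankYK (insubd (rankY y0) (rank P ltX x))).
  by rewrite /= val_insubd (leq_trans (rank_bound linX Px)).
exists h => x y Px Py.
by rewrite (lt_rank linY) // (lt_rank linX) // !rank_h.
Qed.

(* [c] labels the vertices by [n] labels and [E] is the complete multipartite
   digraph whose parts are exactly the (nonempty) fibres of [c]. *)
Definition multipartite_labelling n (T : finType) (c : T -> 'I_n) (E : rel T) : Prop :=
  (forall x y, c x = c y -> E x y = false) /\
  (forall x y, c x <> c y -> E y x = ~~ E x y).

Definition blockwise_order n (T : finType) (c : T -> 'I_n) (lt : rel T) : Prop :=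
  [/\ forall x, lt x x = false,
      forall x y z, c x = c y -> c y = c z -> lt x y -> lt y z -> lt x z &
      forall x y, c x = c y -> x <> y -> lt x y || lt y x].

Lemma blockwise_fibre n (T : finType) (c : T -> 'I_n) (lt : rel T) (l : 'I_n) :
  blockwise_order c lt -> linear_on (fun x => c x == l) lt.
Proof.
case=> irr tr tot; split=> // [x y z /eqP ex /eqP ey /eqP ez|x y /eqP ex /eqP ey].
  by apply: tr; rewrite ?ex ?ey ?ez.
by apply: tot; rewrite ex ey.
Qed.

Definition labelled_embedding n (TA TB : finType) (cA : TA -> 'I_n) (EA ltA : rel TA)
    (cB : TB -> 'I_n) (EB ltB : rel TB) (f : TA -> TB) : Prop :=
  [/\ forall x, cB (f x) = cA x,
      forall x y, EB (f x) (f y) = EA x y &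
      forall x y, cA x = cA y -> ltB (f x) (f y) = ltA x y].

Definition uniform_target n k : Prop :=
  forall (I TA : finType) (EA : rel TA) (cA : I -> TA -> 'I_n) (ltA : I -> rel TA),
  (forall i, multipartite_labelling (cA i) EA /\ blockwise_order (cA i) (ltA i)) ->
  exists (TB : finType) (cB : TB -> 'I_n) (EB ltB0 : rel TB),
  [/\ multipartite_labelling cB EB, blockwise_order cB ltB0,
      (forall l, exists y, cB y = l) &
      forall ltB, blockwise_order cB ltB ->
        (forall x y, cB x = cB y -> k <= cB x -> ltB x y = ltB0 x y) ->
        forall i, exists f, labelled_embedding (cA i) EA (ltA i) cB EB ltB f].

Lemma ltn_ord_flip n (a b : 'I_n) : a <> b -> (b < a) = ~~ (a < b).
Proof. by move=> nab; rewrite ltnNge leq_eqVlt orbC; case: ltngtP => // /val_inj. Qed.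

Section DisjointUnion.
Variables (n : nat) (I TA : finType) (EA : rel TA).
Variables (cA : I -> TA -> 'I_n) (ltA : I -> rel TA).
Hypothesis family_ok :
  forall i, multipartite_labelling (cA i) EA /\ blockwise_order (cA i) (ltA i).

(* One copy of [TA] for each member of the family, plus one vertex per label;
   across copies, edges go from smaller to larger labels and the copies are
   ordered one after the other. *)
Local Notation V := ((I * TA) + 'I_n)%type.

Definition union_label (u : V) : 'I_n :=
  match u with inl p => cA p.1 p.2 | inr l => l end.

Definition union_edge (u v : V) : bool :=
  match u, v with
  | inl p, inl q => if p.1 == q.1 then EA p.2 q.2 else union_label u < union_label v
  | _, _ => union_label u < union_label v
  end.

Definition union_order (u v : V) : bool :=
  match u, v with
  | inl p, inl q =>
      if p.1 == q.1 then ltA p.1 p.2 q.2 else enum_rank p.1 < enum_rank q.1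
  | inl _, inr _ => true
  | _, _ => false
  end.

Lemma union_multipartite : multipartite_labelling union_label union_edge.
Proof.
split=> [[[i x]|l] [[j y]|l']|[[i x]|l] [[j y]|l']] //= e;
  try by [rewrite e ltnn | rewrite ltn_ord_flip].
- case: (eqVneq i j) => [eij|_] /=; last by rewrite e ltnn.
  by subst j; apply: (proj1 (proj1 (family_ok i))).
- case: (eqVneq i j) => [eij|nij] /=.
    by subst j; apply: (proj2 (proj1 (family_ok i))).
  by rewrite ltn_ord_flip.
Qed.

Lemma union_blockwise : blockwise_order union_label union_order.
Proof.
split.
- by move=> [[i x]|l] //=; rewrite eqxx; case: (proj2 (family_ok i)).
- move=> [[i x]|l] [[j y]|l'] [[k z]|l''] //= e1 e2.
  case: (eqVneq i j) => [eij|nij]; case: (eqVneq j k) => [ejk|njk] /=;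
    subst; rewrite ?eqxx //=.
  + by case: (proj2 (family_ok k)) => _ tr _; apply: tr.
  + by move=> _; rewrite (negbTE njk).
  + by rewrite (negbTE nij).
  + case: (eqVneq i k) => [eik|nik]; last exact: ltn_trans.
    by subst; move=> /ltn_trans lt1 /lt1; rewrite ltnn.
- move=> [[i x]|l] [[j y]|l'] //= e ne; last by case: ne; rewrite e.
  case: (eqVneq i j) => [eij|nij] /=.
    subst j; case: (proj2 (family_ok i)) => _ _ tot; apply: tot => // exy.
    by apply: ne; rewrite exy.
  by rewrite -neq_ltn; apply: contra nij => /eqP /val_inj /enum_rank_inj ->.
Qed.

End DisjointUnion.

Lemma uniform_target0 n : uniform_target n 0.
Proof.
move=> I TA EA cA ltA family_ok.
exists _, (union_label cA), (union_edge EA cA), (union_order ltA); split.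
- exact: union_multipartite.
- exact: union_blockwise.
- by move=> l; exists (inr l).
- move=> ltB _ agree i; exists (fun x => inl (i, x)); split=> //= [x y|x y e].
    by rewrite eqxx.
  by rewrite agree //= eqxx.
Qed.

Section FreeLabel.
Variables (n : nat) (TB : finType) (cB : TB -> 'I_n) (EB ltB0 : rel TB) (k : 'I_n).
Hypotheses (labB : multipartite_labelling cB EB) (ordB : blockwise_order cB ltB0).

(* To free the order on the fibre of [k], replace that fibre by a fresh fibre
   [W] larger than [TB], and every other vertex [b] by the pairs [(b, g)] where
   [g : W -> bool] prescribes the directions of the edges between [b] and [W].
   Whatever the order on [W], the [k]-fibre of [TB] order-embeds into it, and
   each [b] then finds the copy [(b, g)] with the right edges to that image. *)
Local Notation W := 'I_#|TB|.+1.
Local Notation V := (W + (TB * {ffun W -> bool}))%type.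

Definition free_label (u : V) : 'I_n :=
  match u with inl _ => k | inr p => cB p.1 end.

Definition free_edge (u v : V) : bool :=
  match u, v with
  | inl _, inl _ => false
  | inl w, inr p => if cB p.1 == k then false else ~~ p.2 w
  | inr p, inl w => if cB p.1 == k then false else p.2 w
  | inr p, inr q => EB p.1 q.1
  end.

Definition free_order (u v : V) : bool :=
  match u, v with
  | inl w, inl w' => w < w'
  | inl _, inr _ => true
  | inr _, inl _ => false
  | inr p, inr q => ltB0 p.1 q.1 || (p.1 == q.1) && (enum_rank p.2 < enum_rank q.2)
  end.

Lemma free_multipartite : multipartite_labelling free_label free_edge.
Proof.
case: labB => noedge oneedge.
split=> [[w|[b g]] [w'|[b' g']]|[w|[b g]] [w'|[b' g']]] //= e.
- by rewrite -e eqxx.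
- by rewrite e eqxx.
- exact: noedge.
- by case: eqP => [eb|]; [case: e|rewrite negbK].
- by case: eqP => [eb|]; [case: e|].
- exact: oneedge.
Qed.

Lemma free_blockwise : blockwise_order free_label free_order.
Proof.
case: ordB => irr tr tot; split.
- by move=> [w|[b g]] /=; rewrite ?irr ?eqxx ltnn.
- move=> [w|[b1 g1]] [w'|[b2 g2]] [w''|[b3 g3]] //= e12 e23; first exact: ltn_trans.
  move=> /orP[l12|/andP[/eqP eb12 r12]] /orP[l23|/andP[/eqP eb23 r23]]; apply/orP.
  + by left; apply: tr l23.
  + by left; rewrite -eb23.
  + by left; rewrite eb12.
  + by right; rewrite eb12 eb23 eqxx (ltn_trans r12).
- move=> [w|[b g]] [w'|[b' g']] //= e ne.
    by rewrite -neq_ltn; apply/eqP => /val_inj ew; apply: ne; rewrite ew.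
  case: (eqVneq b b') => [ebb|nbb] /=.
    subst b'; rewrite irr /= -neq_ltn.
    by apply/eqP => /val_inj /enum_rank_inj egg; apply: ne; rewrite egg.
  by case/orP: (tot _ _ e (elimN eqP nbb)) => ->; rewrite ?orbT.
Qed.

Lemma free_labels_onto : (forall l, exists b, cB b = l) -> forall l, exists u, free_label u = l.
Proof. by move=> onto l; have [b eb] := onto l; exists (inr (b, [ffun=> false])). Qed.

Section Embedding.
Variables (ltV : rel V) (h : TB -> W).
Hypothesis ltV_irr : forall u, ltV u u = false.
Hypothesis ltV_default :
  forall u v, free_label u = free_label v -> k < free_label u -> ltV u v = free_order u v.
Hypothesis h_order : forall x y, cB x == k -> cB y == k ->
  ltV (inl (h x)) (inl (h y)) = ltB0 x y.

Lemma h_inj x y : cB x == k -> cB y == k -> h x = h y -> x = y.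
Proof.
case: ordB => _ _ tot kx ky hxy; apply/eqP; apply: contraT => nxy.
have := tot x y (etrans (eqP kx) (esym (eqP ky))) (elimN eqP nxy).
by rewrite -!h_order // hxy ltV_irr.
Qed.

Definition edge_code (b : TB) : {ffun W -> bool} :=
  [ffun w => [exists b', [&& cB b' == k, h b' == w & EB b b']]].

Lemma edge_codeE b b' : cB b' == k -> edge_code b (h b') = EB b b'.
Proof.
move=> kb'; rewrite ffunE; apply/existsP/idP => [[b'' /and3P[kb'' /eqP hb]]|Ebb'].
  by rewrite (h_inj kb'' kb' hb).
by exists b'; rewrite kb' eqxx.
Qed.

Definition free_map (b : TB) : V :=
  if cB b == k then inl (h b) else inr (b, edge_code b).

Lemma free_map_inj : injective free_map.
Proof.
rewrite /free_map => x y; case kx: (cB x == k); case ky: (cB y == k) => //.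
  by case=> /(h_inj kx ky).
by case.
Qed.

Lemma free_map_label b : free_label (free_map b) = cB b.
Proof. by rewrite /free_map; case: eqP. Qed.

Lemma free_map_edge x y : free_edge (free_map x) (free_map y) = EB x y.
Proof.
case: labB => noedge oneedge.
rewrite /free_map; case kx: (cB x == k); case ky: (cB y == k) => //=.
- by rewrite noedge // (eqP kx) (eqP ky).
- rewrite ky edge_codeE // -oneedge // => exy.
  by move: ky; rewrite exy kx.
- by rewrite kx edge_codeE.
Qed.

Lemma free_map_order x y : cB x = cB y -> k <= cB x ->
  ltV (free_map x) (free_map y) = ltB0 x y.
Proof.
case: ordB => irr _ _ exy kx; rewrite /free_map -exy.
case: ifP => [kx'|nkx]; first by rewrite h_order // -exy.
rewrite ltV_default //=; last first.
  by rewrite ltn_neqAle kx andbT; apply: contraFN nkx => /eqP /val_inj ->.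
case: (eqVneq x y) => [<-|nxy] /=; first by rewrite irr ltnn.
by rewrite orbF.
Qed.

End Embedding.

Lemma free_embedding (ltV : rel V) :
  blockwise_order free_label ltV ->
  (forall u v, free_label u = free_label v -> k < free_label u -> ltV u v = free_order u v) ->
  exists e : TB -> V, [/\ injective e, forall b, free_label (e b) = cB b,
    forall x y, free_edge (e x) (e y) = EB x y &
    forall x y, cB x = cB y -> k <= cB x -> ltV (e x) (e y) = ltB0 x y].
Proof.
case=> irrV trV totV default.
have linW : linear_on predT (fun w w' : W => ltV (inl w) (inl w')).
  split=> // [w w' w'' _ _ _|w w' _ _ nw]; first exact: trV.
  by apply: totV => // -[].
have fibre_small : #|(fun b => cB b == k)| <= #|W|.
  by rewrite card_ord ltnW // ltnS max_card.
have [h h_order] :=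
  linear_order_embedding ord0 (blockwise_fibre k ordB) linW fibre_small.
exists (free_map h); split.
- exact: free_map_inj irrV h_order.
- exact: free_map_label.
- exact: free_map_edge irrV h_order.
- exact: free_map_order default h_order.
Qed.

End FreeLabel.

Lemma uniform_target_step n k (kn : k < n) : uniform_target n k -> uniform_target n k.+1.
Proof.
move=> IH I TA EA cA ltA family_ok.
have [TB [cB [EB [ltB0 [labB ordB onto embB]]]]] := IH I TA EA cA ltA family_ok.
pose kn' := Ordinal kn.
exists _, (free_label cB kn'), (free_edge cB EB kn'), (free_order ltB0); split.
- exact: free_multipartite.
- exact: free_blockwise.
- exact: free_labels_onto.
move=> ltV ordV default i.
have [e [e_inj e_label e_edge e_order]] := free_embedding labB ordB ordV default.
pose ltB x y := ltV (e x) (e y).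
have ordB' : blockwise_order cB ltB.
  case: ordV => irr tr tot; split=> [x|x y z exy eyz|x y exy nxy].
  - exact: irr.
  - by apply: tr; rewrite !e_label.
  - by apply: tot; [rewrite !e_label | move/e_inj].
have [f [f_label f_edge f_order]] := embB ltB ordB' e_order i.
exists (e \o f); split=> [x|x y|x y exy] /=.
- by rewrite e_label f_label.
- by rewrite e_edge f_edge.
- by rewrite -f_order.
Qed.

Lemma uniform_target_all n : uniform_target n n.
Proof.
suff: forall k, k <= n -> uniform_target n k by apply.
elim=> [|k IH] kn; first exact: uniform_target0.
exact: uniform_target_step (IH (ltnW kn)).
Qed.

Lemma star_index n (n_pos : 0 < n) (T : finType) (E : rel T)
    (P : 'I_n -> {set T}) (lt : rel T) :
  in_Kn_star E P lt ->
  exists c : T -> 'I_n, (forall x i, (x \in P i) = (c x == i)) /\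
                        (forall x y, (c x == c y) = nonadj E x y).
Proof.
move=> [[[_ nonadj_eqv] _] [disj P_part P_cover _ _]].
have nonadj_refl x : nonadj E x x by rewrite /nonadj eqxx.
have P_ex x : exists i, x \in P i.
  have [i ei] := P_cover (part_of E x) (ex_intro _ x erefl).
  by exists i; rewrite -ei inE nonadj_refl.
pose c x := odflt (Ordinal n_pos) [pick i | x \in P i].
have P_c x : x \in P (c x).
  rewrite /c; case: pickP => [i //|none].
  by have [i xi] := P_ex x; rewrite none in xi.
have P_E x i : (x \in P i) = (c x == i).
  apply/idP/eqP => [xi|<-//]; apply/eqP; apply: contraT => nci.
  by rewrite (disjointFr (disj _ _ nci) (P_c x)) in xi.
have P_c_part x : P (c x) = part_of E x.
  case: (P_part (c x)) => [e|[z ez]]; first by have := P_c x; rewrite e inE.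
  have zx : nonadj E z x by have := P_c x; rewrite ez inE.
  rewrite ez; apply/setP => w; rewrite !inE.
  by have [_ ->] := nonadj_eqv z x w.
exists c; split=> // x y.
by rewrite eq_sym -P_E P_c_part inE.
Qed.

Lemma labelling_nonadj n (T : finType) (c : T -> 'I_n) (E : rel T) :
  multipartite_labelling c E -> forall x y, nonadj E x y = (c x == c y).
Proof.
move=> [noedge oneedge] x y; rewrite /nonadj.
case: (eqVneq x y) => [->|nxy]; first by rewrite eqxx.
case: (eqVneq (c x) (c y)) => [e|ne] /=; first by rewrite noedge // noedge.
by rewrite (oneedge x y (elimN eqP ne)); case: (E x y).
Qed.

Lemma labelling_in_Kn n (T : finType) (c : T -> 'I_n) (E : rel T) :
  multipartite_labelling c E -> in_Kn n E.
Proof.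
move=> lab; have c_nonadj := labelling_nonadj lab; case: lab => noedge oneedge.
split; first split.
- split=> [x|x y Exy]; first by rewrite noedge.
  case: (eqVneq (c x) (c y)) => [e|ne]; first by rewrite noedge in Exy.
  by rewrite oneedge ?Exy //; apply/eqP.
- by move=> x y z; rewrite !c_nonadj eqxx; split=> // /eqP ->.
- have parts_fibres : parts E \subset [set [set y | c y == l] | l : 'I_n].
    apply/subsetP=> X /imsetP[x _ ->]; apply/imsetP; exists (c x) => //.
    by apply/setP=> y; rewrite !inE c_nonadj eq_sym.
  apply: leq_trans (subset_leq_card parts_fibres) _.
  by apply: leq_trans (leq_imset_card _ _) _; rewrite card_ord.
Qed.

Lemma nonadj_labelling n (T : finType) (c : T -> 'I_n) (E : rel T) :
  is_digraph E -> (forall x y, (c x == c y) = nonadj E x y) ->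
  multipartite_labelling c E.
Proof.
move=> [irr asym] c_nonadj; split=> x y /eqP; rewrite c_nonadj /nonadj.
  by case: (eqVneq x y) => [->|_] /=; [move=> _; apply/negbTE | case/andP=> /negbTE].
rewrite negb_or negb_and !negbK => /andP[_].
by case Exy: (E x y) => /=; [move=> _; apply/negbTE/asym | move=> ->].
Qed.

Lemma relabel n (T : finType) (c d : T -> 'I_n) (E : rel T) :
  multipartite_labelling c E -> (forall l, exists y, c y = l) ->
  (forall x y, (d x == d y) = nonadj E x y) ->
  exists phi : 'I_n -> 'I_n, bijective phi /\ forall y, phi (c y) = d y.
Proof.
move=> lab onto d_nonadj.
pose phi (l : 'I_n) := odflt l (omap d [pick y | c y == l]).
have phiE y : phi (c y) = d y.
  rewrite /phi; case: pickP => [x /eqP cx /=|none]; last by have := none y; rewrite eqxx.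
  by apply/eqP; rewrite d_nonadj (labelling_nonadj lab) cx.
have phi_inj : injective phi.
  move=> l l'; have [y <-] := onto l; have [y' <-] := onto l'.
  by rewrite !phiE => /eqP; rewrite d_nonadj (labelling_nonadj lab) => /eqP.
by exists phi; split; [apply: injF_bij phi_inj | apply: phiE].
Qed.

(* Labelled expansions of a fixed finite digraph, coded as finite functions so
   that they form a finite type: a labelling and an order relation. *)
Definition expansion_code n (T : finType) : finType :=
  ({ffun T -> 'I_n} * {ffun T * T -> bool})%type.

Definition code_label n (T : finType) (p : expansion_code n T) (x : T) : 'I_n := p.1 x.
Definition code_order n (T : finType) (p : expansion_code n T) (x y : T) : bool :=
  p.2 (x, y).

Definition code_of n (T : finType) (c : T -> 'I_n) (lt : rel T) : expansion_code n T :=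
  ([ffun x => c x], [ffun q => lt q.1 q.2]).

Definition valid_code n (T : finType) (E : rel T) (p : expansion_code n T) : bool :=
  let c := code_label p in let lt := code_order p in
  [&& [forall x, forall y, (c x == c y) ==> ~~ E x y],
      [forall x, forall y, (c x != c y) ==> (E y x == ~~ E x y)],
      [forall x, ~~ lt x x],
      [forall x, forall y, forall z,
         [&& c x == c y, c y == c z, lt x y & lt y z] ==> lt x z] &
      [forall x, forall y, (c x == c y) && (x != y) ==> lt x y || lt y x]].

Lemma valid_codeP n (T : finType) (E : rel T) (p : expansion_code n T) :
  reflect (multipartite_labelling (code_label p) E /\
           blockwise_order (code_label p) (code_order p))
          (valid_code E p).
Proof.
apply: (iffP and5P) => [[noedge oneedge irr tr tot]|[[noedge oneedge] [irr tr tot]]].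
  split; split.
  - by move=> x y /eqP e; apply/negbTE; move/forallP/(_ x)/forallP/(_ y)/implyP: noedge; apply.
  - by move=> x y /eqP e; apply/eqP; move/forallP/(_ x)/forallP/(_ y)/implyP: oneedge; apply.
  - by move=> x; apply/negbTE; move/forallP: irr.
  - move=> x y z /eqP exy /eqP eyz lxy lyz.
    by move/forallP/(_ x)/forallP/(_ y)/forallP/(_ z)/implyP: tr; apply; apply/and4P.
  - move=> x y /eqP exy /eqP nxy.
    by move/forallP/(_ x)/forallP/(_ y)/implyP: tot; apply; apply/andP.
split.
- by apply/forallP=> x; apply/forallP=> y; apply/implyP=> /eqP/noedge ->.
- by apply/forallP=> x; apply/forallP=> y; apply/implyP=> /eqP/oneedge ->.
- by apply/forallP=> x; rewrite irr.
- apply/forallP=> x; apply/forallP=> y; apply/forallP=> z; apply/implyP.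
  by case/and4P=> /eqP exy /eqP eyz; apply: tr.
- apply/forallP=> x; apply/forallP=> y; apply/implyP.
  by case/andP=> /eqP exy /eqP nxy; apply: tot.
Qed.

Lemma code_of_valid n (T : finType) (E : rel T) (c : T -> 'I_n) (lt : rel T) :
  is_digraph E -> (forall x y, (c x == c y) = nonadj E x y) ->
  [/\ forall x, ~~ lt x x, forall x y z, lt x y -> lt y z -> lt x z &
      forall x y, x != y -> lt x y || lt y x] ->
  valid_code E (code_of c lt).
Proof.
move=> digraph c_nonadj [irr tr tot]; apply/valid_codeP; split.
  by apply: nonadj_labelling => // x y; rewrite /code_label !ffunE.
rewrite /code_label /code_order; split=> [x|x y z _ _|x y _ /eqP nxy]; rewrite !ffunE.
- exact/negbTE.
- exact: tr.
- exact: tot.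
Qed.

Lemma linear_blockwise n (T : finType) (c : T -> 'I_n) (lt : rel T) :
  [/\ forall x, ~~ lt x x, forall x y z, lt x y -> lt y z -> lt x z &
      forall x y, x != y -> lt x y || lt y x] ->
  blockwise_order c lt.
Proof.
by case=> irr tr tot; split=> [x|x y z _ _|x y _ /eqP nxy]; [apply/negbTE|apply: tr|apply: tot].
Qed.

(* Turning a labelled embedding into an embedding of [K_n^*]-structures: labels
   are part indices; the order across parts is forced by the part indices. *)
Lemma star_embedding_of_parts n (TA TB : finType) (EA : rel TA)
    (PA : 'I_n -> {set TA}) (ltA : rel TA) (EB : rel TB) (PB : 'I_n -> {set TB})
    (ltB : rel TB) (cA : TA -> 'I_n) (cB : TB -> 'I_n) (f : TA -> TB) :
  in_Kn_star EA PA ltA -> in_Kn_star EB PB ltB ->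
  (forall x i, (x \in PA i) = (cA x == i)) -> (forall y i, (y \in PB i) = (cB y == i)) ->
  (forall x, cB (f x) = cA x) -> (forall x y, EB (f x) (f y) = EA x y) ->
  (forall x y, cA x = cA y -> ltB (f x) (f y) = ltA x y) ->
  star_embedding EA PA ltA EB PB ltB f.
Proof.
move=> [_ [_ _ _ [irrA trA totA] monA]] [_ [_ _ _ [irrB trB _] monB]].
move=> PA_E PB_E f_label f_edge f_order_part.
have PA_c x : x \in PA (cA x) by rewrite PA_E.
have PB_c x : f x \in PB (cA x) by rewrite PB_E f_label.
have f_order x y : ltB (f x) (f y) = ltA x y.
  case: (ltngtP (cA x) (cA y)) => [cxy|cyx|/val_inj]; last exact: f_order_part.
    by rewrite (monA _ _ _ _ cxy (PA_c x) (PA_c y)) (monB _ _ _ _ cxy (PB_c x) (PB_c y)).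
  have ltA_yx := monA _ _ _ _ cyx (PA_c y) (PA_c x).
  have ltB_yx := monB _ _ _ _ cyx (PB_c y) (PB_c x).
  apply/idP/idP => [/trB/(_ ltB_yx)|/trA/(_ ltA_yx)]; by rewrite ?(negbTE (irrA x)) ?(negbTE (irrB (f x))).
split=> // [x y fxy|i x].
  apply/eqP; apply: contraT => nxy.
  by have := totA x y nxy; rewrite -!f_order fxy orbb (negbTE (irrB (f y))).
by rewrite PA_E PB_E f_label.
Qed.

(* The target [B] is a uniform target for the (finite) family of
   all labelled ordered expansions of [A]; given orders on [A] and [B] in
   [K_n^*], relabel [A] through the permutation matching the labels of [B] with
   its part indices, and use the embedding of the corresponding expansion. *)
Theorem theorem8p6 (n : nat) (n_pos : 0 < n) :
  forall (TA : finType) (EA : rel TA), in_Kn n EA ->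
  exists (TB : finType) (EB : rel TB), in_Kn n EB /\
    forall (PA : 'I_n -> {set TA}) (ltA : rel TA)
           (PB : 'I_n -> {set TB}) (ltB : rel TB),
      in_Kn_star EA PA ltA -> in_Kn_star EB PB ltB ->
      exists f : TA -> TB, star_embedding EA PA ltA EB PB ltB f.
Proof.
move=> TA EA _.
pose I := {p : expansion_code n TA | valid_code EA p}.
have family_ok (i : I) := elimT (valid_codeP EA (val i)) (valP i).
have [TB [cB [EB [ltB0 [labB _ onto embB]]]]] := uniform_target_all family_ok.
exists TB, EB; split=> [|PA ltA PB ltB starA starB]; first exact: labelling_in_Kn labB.
have [cPA [PA_E cPA_E]] := star_index n_pos starA.
have [cPB [PB_E cPB_E]] := star_index n_pos starB.
have [phi [[psi phiK psiK] phiE]] := relabel labB onto cPB_E.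
have cA_nonadj x y : (psi (cPA x) == psi (cPA y)) = nonadj EA x y.
  by rewrite (inj_eq (can_inj psiK)).
have [[[digraphA _] _] [_ _ _ linA _]] := starA.
pose i : I := exist _ (code_of _ ltA) (code_of_valid digraphA cA_nonadj linA).
have [_ [_ _ _ linB _]] := starB.
have no_default x y : cB x = cB y -> n <= cB x -> ltB x y = ltB0 x y.
  by move=> _; rewrite leqNgt ltn_ord.
have [f [f_label f_edge f_order]] := embB ltB (linear_blockwise cB linB) no_default i.
exists f; apply: (star_embedding_of_parts starA starB PA_E PB_E) => // [x|x y e].
- by rewrite -phiE f_label /code_label /= ffunE psiK.
- by rewrite f_order /code_label /code_order /= !ffunE ?e.
Qed.
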